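(* Let $N\ge 2$ and let $A_1,\dots,A_N$ be distinct Boolean variables. Then $$A_1\vee A_2\vee\dots\vee A_N=(A_1<(A_2<\cdots(A_N<1)\cdots))<1$$ as Boolean functions, and this right-hand side, which contains exactly two occurrences of the constant $1$ and exactly one occurrence of each variable $A_i$, is a minimal $(<,1)$-representation of $A_1\vee\dots\vee A_N$, i.e. no $(<,1)$-expression representing $A_1\vee\dots\vee A_N$ uses fewer occurrences of the operation $<$.
   Context: The binary Boolean operation $<$ (Strict Boolean Inequality) is defined by $A<B=(\neg A)\wedge B$, i.e. $A<B=1$ iff $A=0$ and $B=1$. A $(<,1)$-representation (or $(<,1)$-expression) of a Boolean function of variables $A_1,\dots,A_N$ is a formula built from the variables $A_1,\dots,A_N$ and the constant $1$ using only the binary operation $<$, which computes that function; its cost is the number of occurrences of $<$ (number of gates), and a representation is minimal if no representation of the same function has smaller cost. *)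

From mathcomp Require Import all_boot.
Set Implicit Arguments. Unset Strict Implicit. Unset Printing Implicit Defensive.

(* (<,1)-expressions over the variables A_0,...,A_{N-1} (indexed by 'I_N) *)
Inductive ltexpr (N : nat) : Type :=
| LVar : 'I_N -> ltexpr N
| LOne : ltexpr N
| LLt : ltexpr N -> ltexpr N -> ltexpr N.

Arguments LOne {N}.

(* strict Boolean inequality: A < B = (~A) /\ B *)
Definition sbi (a b : bool) : bool := ~~ a && b.

Fixpoint eval_lt N (v : 'I_N -> bool) (e : ltexpr N) : bool :=
  match e with
  | LVar i => v i
  | LOne => true
  | LLt e1 e2 => sbi (eval_lt v e1) (eval_lt v e2)
  end.

Fixpoint cost N (e : ltexpr N) : nat :=
  match e with
  | LVar _ => 0
  | LOne => 0
  | LLt e1 e2 => (cost e1 + cost e2).+1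
  end.

Fixpoint ones N (e : ltexpr N) : nat :=
  match e with
  | LVar _ => 0
  | LOne => 1
  | LLt e1 e2 => ones e1 + ones e2
  end.

Fixpoint var_occ N (i : 'I_N) (e : ltexpr N) : nat :=
  match e with
  | LVar j => (j == i)
  | LOne => 0
  | LLt e1 e2 => var_occ i e1 + var_occ i e2
  end.

Definition represents N (e : ltexpr N) (f : ('I_N -> bool) -> bool) : Prop :=
  forall v, eval_lt v e = f v.

Definition big_or N (v : 'I_N -> bool) : bool := [exists i, v i].

Definition or_repr N : ltexpr N :=
  LLt (foldr (fun i acc => LLt (LVar i) acc) LOne (enum 'I_N)) LOne.

From mathcomp Require Import all_boot.
From mathcomp Require Import zify.
Set Implicit Arguments. Unset Strict Implicit.

(* The chain A_1 < (A_2 < ... (A_N < 1)) is true exactly when all A_i are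
   false, so a final [< 1] turns it into the disjunction.  For minimality,
   cost + 1 counts the leaves of an expression.  A representation of the
   disjunction mentions every variable (else it cannot tell the all-false
   valuation from the indicator of a missing variable) and contains 1 at
   least twice: as [x < y] implies [y], an expression with at most one 1
   either implies a single variable, which fails for N >= 2, or is true on
   the all-false valuation. *)

Section LtExpr.
Variable N : nat.
Implicit Types (e : ltexpr N) (v w : 'I_N -> bool).

Definition lt_chain (s : seq 'I_N) : ltexpr N :=
  foldr (fun i acc => LLt (LVar i) acc) LOne s.

Lemma cost_lt_chain s : cost (lt_chain s) = size s.
Proof. by elim: s => //= i s ->. Qed.

Lemma ones_lt_chain s : ones (lt_chain s) = 1.
Proof. by elim: s. Qed.

Lemma var_occ_lt_chain i s : var_occ i (lt_chain s) = count_mem i s.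
Proof. by elim: s => //= j s ->; rewrite eq_sym. Qed.

Lemma eval_lt_chain v s : eval_lt v (lt_chain s) = all (fun i => ~~ v i) s.
Proof. by elim: s => //= i s ->. Qed.

Lemma cost_leaves e : (cost e).+1 = ones e + \sum_(i < N) var_occ i e.
Proof.
elim: e => [j | | e1 IH1 e2 IH2] /=.
- rewrite (bigD1 j) //= eqxx big1 // => k /negPf.
  by rewrite eq_sym => ->.
- by rewrite big1.
- by rewrite big_split /= addnACA -IH1 -IH2 addSn addnS.
Qed.

Lemma eq_eval_lt v w e :
  (forall i, var_occ i e != 0 -> v i = w i) -> eval_lt v e = eval_lt w e.
Proof.
elim: e => [j | | e1 IH1 e2 IH2] //= Hvw; first by apply: Hvw; rewrite eqxx.
by rewrite IH1 ?IH2 // => i Hi; apply: Hvw; rewrite addn_eq0 negb_and Hi ?orbT.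
Qed.

Let vfalse : 'I_N -> bool := fun=> false.

Lemma eval_lt_false_ones0 e : ones e = 0 -> eval_lt vfalse e = false.
Proof.
elim: e => //= e1 _ e2 IH2 /eqP; rewrite addn_eq0 => /andP[_ /eqP ones2].
by rewrite /sbi IH2 // andbF.
Qed.

Lemma ones_le1_dichotomy e : ones e <= 1 ->
  eval_lt vfalse e \/ exists j, forall v, eval_lt v e -> v j.
Proof.
elim: e => [j | | e1 _ e2 IH2] /=; [by right; exists j | by left |].
move=> H1; have [E2 | [j Hj]] := IH2 (leq_trans (leq_addl _ _) H1).
  left; have ones2 : ones e2 = 1.
    by apply/eqP; rewrite eqn_leq (leq_trans (leq_addl _ _) H1) lt0n;
       apply/eqP => /eval_lt_false_ones0; rewrite E2.
  have ones1 : ones e1 = 0 by lia.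
  by rewrite /sbi eval_lt_false_ones0 // E2.
by right; exists j => v /andP[_ /Hj].
Qed.

Lemma big_or_repr_var_occ e i : represents e (@big_or N) -> 0 < var_occ i e.
Proof.
move=> He; rewrite lt0n; apply/negP => /eqP occ0.
have E : eval_lt vfalse e = eval_lt (fun k => k == i) e.
  by apply: eq_eval_lt => k; case: (k =P i) => [-> | //]; rewrite occ0.
have : big_or (fun k => k == i) by apply/existsP; exists i.
by rewrite -He -E He => /existsP[].
Qed.

Hypothesis N_ge2 : 1 < N.

Lemma big_or_repr_ones e : represents e (@big_or N) -> 2 <= ones e.
Proof.
move=> He; rewrite leqNgt; apply/negP => /ones_le1_dichotomy[|[j Hj]].
  by rewrite He => /existsP[].
have /card_gt0P[k kj] : 0 < #|predC1 j| by rewrite cardC1 card_ord; lia.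
suff : big_or (fun i => i != j) by rewrite -He => /Hj; rewrite eqxx.
by apply/existsP; exists k.
Qed.

Lemma big_or_repr_cost e : represents e (@big_or N) -> N.+1 <= cost e.
Proof.
move=> He; have := cost_leaves e; have := big_or_repr_ones He.
have : N <= \sum_(i < N) var_occ i e.
  by rewrite -[N in N <= _]card_ord -sum1_card leq_sum // => i _; exact: big_or_repr_var_occ.
lia.
Qed.

End LtExpr.

Theorem mainTheorem3 (N : nat) (hN : 2 <= N) :
  represents (or_repr N) (@big_or N)
  /\ ones (or_repr N) = 2
  /\ (forall i : 'I_N, var_occ i (or_repr N) = 1)
  /\ (forall e : ltexpr N, represents e (@big_or N) -> cost (or_repr N) <= cost e).
Proof.
have -> : or_repr N = LLt (lt_chain (enum 'I_N)) LOne by [].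
split; [|split; [|split]] => /=.
- move=> v /=; rewrite eval_lt_chain /sbi andbT /big_or -has_predC.
  apply/hasP/existsP => [[i _ /negPn] | [i vi]]; first by exists i.
  by exists i; rewrite ?mem_enum //= vi.
- by rewrite ones_lt_chain.
- by move=> i; rewrite var_occ_lt_chain addn0 count_uniq_mem ?enum_uniq ?mem_enum.
- by move=> e He; rewrite cost_lt_chain size_enum_ord addn0; exact: big_or_repr_cost.
Qed.
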